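(* Let $n,p_1,p_2\ge 1$, $p=p_1+p_2$, let $(A_k)_{k\ge 0}$ be a sequence of real $n\times n$ matrices, $C_1\in\mathbb{R}^{p_1\times n}$, $C_2\in\mathbb{R}^{p_2\times n}$, $C=\begin{pmatrix}C_1\\ C_2\end{pmatrix}$, $Q=Q^T>0$ ($n\times n$), and $R=R^T=\begin{pmatrix}R_{11}&R_{12}\\ R_{21}&R_{22}\end{pmatrix}>0$ ($p\times p$, with $R_{11}$ of size $p_1\times p_1$, $R_{22}$ of size $p_2\times p_2$). Fix $\lambda_1,\lambda_2\in[0,1]$. For $X=X^T\ge 0$ define $$g_{\lambda_1\lambda_2}(k,X)=A_kXA_k^T+Q-\lambda_1\lambda_2A_kXC^T(CXC^T+R)^{-1}CXA_k^T-\lambda_1(1-\lambda_2)A_kXC_1^T(C_1XC_1^T+R_{11})^{-1}C_1XA_k^T-(1-\lambda_1)\lambda_2A_kXC_2^T(C_2XC_2^T+R_{22})^{-1}C_2XA_k^T,$$ and for matrices $K\in\mathbb{R}^{n\times p}$, $K_1\in\mathbb{R}^{n\times p_1}$, $K_2\in\mathbb{R}^{n\times p_2}$ define $$\phi(k,K,K_1,K_2,X)=(1-\lambda_1)(1-\lambda_2)(A_kXA_k^T+Q)+\lambda_1\lambda_2\big((A_k+KC)X(A_k+KC)^T+Q+KRK^T\big)$$ $$+\lambda_1(1-\lambda_2)\big((A_k+K_1C_1)X(A_k+K_1C_1)^T+Q+K_1R_{11}K_1^T\big)+(1-\lambda_1)\lambda_2\big((A_k+K_2C_2)X(A_k+K_2C_2)^T+Q+K_2R_{22}K_2^T\big).$$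 Suppose there exist matrices $K_k\in\mathbb{R}^{n\times p}$, $K_{k,1}\in\mathbb{R}^{n\times p_1}$, $K_{k,2}\in\mathbb{R}^{n\times p_2}$ ($k\ge 0$) and a symmetric matrix $\bar P>0$ such that $\bar P>\phi(k,K_k,K_{k,1},K_{k,2},\bar P)$ for all $k\ge 0$. Then for every symmetric $P_0\ge 0$, the sequence defined by $P_{k+1}=g_{\lambda_1\lambda_2}(k,P_k)$ is bounded.
   Context: All matrix inequalities are in the Loewner (positive semidefinite) order: $M>N$ means $M-N$ is positive definite, $M\ge N$ means $M-N$ is positive semidefinite. The recursion $P_{k+1}=g_{\lambda_1\lambda_2}(k,P_k)$ is the covariance recursion of an extended Kalman filter whose two measurement channels (outputs $C_1x$, $C_2x$) deliver measurements with probabilities $\lambda_1,\lambda_2$, with $A_k$ the Jacobian of the dynamics at step $k$. *)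

From HB Require Import structures.
From mathcomp Require Import all_boot all_order all_algebra.
From mathcomp Require Import reals.
Set Implicit Arguments. Unset Strict Implicit. Unset Printing Implicit Defensive.
Import Order.TTheory GRing.Theory Num.Theory.
Local Open Scope ring_scope.

Definition psdmx (R : realType) (n : nat) (M : 'M[R]_n) : Prop :=
  M^T = M /\ forall x : 'cV[R]_n, 0 <= (x^T *m M *m x) 0 0.

Definition pdmx (R : realType) (n : nat) (M : 'M[R]_n) : Prop :=
  M^T = M /\ forall x : 'cV[R]_n, x != 0 -> 0 < (x^T *m M *m x) 0 0.

Definition loewner_gt (R : realType) (n : nat) (M N : 'M[R]_n) : Prop :=
  pdmx (M - N).

Definition gEKF (R : realType) (n p1 p2 : nat) (A : nat -> 'M[R]_n)
  (C1 : 'M[R]_(p1, n)) (C2 : 'M[R]_(p2, n)) (Q : 'M[R]_n)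
  (Rm : 'M[R]_(p1 + p2)) (l1 l2 : R) (k : nat) (X : 'M[R]_n) : 'M[R]_n :=
  let Ak := A k in
  let C := col_mx C1 C2 in
  Ak *m X *m Ak^T + Q
  - (l1 * l2) *: (Ak *m X *m C^T *m invmx (C *m X *m C^T + Rm) *m C *m X *m Ak^T)
  - (l1 * (1 - l2)) *: (Ak *m X *m C1^T *m invmx (C1 *m X *m C1^T + ulsubmx Rm)
                          *m C1 *m X *m Ak^T)
  - ((1 - l1) * l2) *: (Ak *m X *m C2^T *m invmx (C2 *m X *m C2^T + drsubmx Rm)
                          *m C2 *m X *m Ak^T).

Definition phiEKF (R : realType) (n p1 p2 : nat) (A : nat -> 'M[R]_n)
  (C1 : 'M[R]_(p1, n)) (C2 : 'M[R]_(p2, n)) (Q : 'M[R]_n)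
  (Rm : 'M[R]_(p1 + p2)) (l1 l2 : R) (k : nat)
  (K : 'M[R]_(n, p1 + p2)) (K1 : 'M[R]_(n, p1)) (K2 : 'M[R]_(n, p2))
  (X : 'M[R]_n) : 'M[R]_n :=
  let Ak := A k in
  let C := col_mx C1 C2 in
  ((1 - l1) * (1 - l2)) *: (Ak *m X *m Ak^T + Q)
  + (l1 * l2) *: ((Ak + K *m C) *m X *m (Ak + K *m C)^T + Q + K *m Rm *m K^T)
  + (l1 * (1 - l2)) *: ((Ak + K1 *m C1) *m X *m (Ak + K1 *m C1)^T + Q
                         + K1 *m ulsubmx Rm *m K1^T)
  + ((1 - l1) * l2) *: ((Ak + K2 *m C2) *m X *m (Ak + K2 *m C2)^T + Q
                         + K2 *m drsubmx Rm *m K2^T).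

From HB Require Import structures.
From mathcomp Require Import all_boot all_order all_algebra.
From mathcomp Require Import reals.
From mathcomp Require Import ring lra.
Import Order.TTheory GRing.Theory Num.Theory.
Set Implicit Arguments. Unset Strict Implicit. Unset Printing Implicit Defensive.
Local Open Scope ring_scope.

(* Each channel contributes a Riccati term A X A^T - A X C^T (C X C^T + R)^-1 C X A^T,
   which by completing the square is the minimum over gains K of the closed-loop
   covariance (A + K C) X (A + K C)^T + K R K^T; hence g(k, X) <= phi(k, K, K1, K2, X)
   for all gains.  As phi is affine and monotone in X with a positive semidefinite
   constant part, X <= al Pbar with al >= 1 gives phi(k, K_k, .., X) <= al phi(k, K_k, .., Pbar)
   <= al Pbar.  Since Pbar > 0, some al bounds P_0, so by induction 0 <= P_k <= al Pbar,
   and every entry of such a matrix is bounded by al tr Pbar. *)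

Section QuadraticForm.
Variable R : realType.
Implicit Types (a b : R).

Definition bf n (M : 'M[R]_n) (x y : 'cV[R]_n) : R := (x^T *m M *m y) 0 0.
Definition qf n (M : 'M[R]_n) (x : 'cV[R]_n) : R := bf M x x.

(* Compares quadratic forms only: unlike [loewner_gt], no symmetry is required. *)
Definition loewner_le n (M N : 'M[R]_n) : Prop := forall x, qf M x <= qf N x.

Lemma qfD n (M N : 'M[R]_n) x : qf (M + N) x = qf M x + qf N x.
Proof. by rewrite /qf /bf mulmxDr mulmxDl mxE. Qed.

Lemma qfZ n a (M : 'M[R]_n) x : qf (a *: M) x = a * qf M x.
Proof. by rewrite /qf /bf -scalemxAr -scalemxAl mxE. Qed.

Lemma qfB n (M N : 'M[R]_n) x : qf (M - N) x = qf M x - qf N x.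
Proof. by rewrite qfD -scaleN1r qfZ mulN1r. Qed.

Lemma qf_conj n m (Y : 'M[R]_(n, m)) (M : 'M[R]_m) x :
  qf (Y *m M *m Y^T) x = qf M (Y^T *m x).
Proof. by rewrite /qf /bf trmx_mul trmxK !mulmxA. Qed.

Lemma bfDl n (M : 'M[R]_n) x y z : bf M (x + y) z = bf M x z + bf M y z.
Proof. by rewrite /bf linearD /= !mulmxDl mxE. Qed.

Lemma bfDr n (M : 'M[R]_n) x y z : bf M x (y + z) = bf M x y + bf M x z.
Proof. by rewrite /bf mulmxDr mxE. Qed.

Lemma bfZl n (M : 'M[R]_n) a x y : bf M (a *: x) y = a * bf M x y.
Proof. by rewrite /bf linearZ /= -!scalemxAl mxE. Qed.

Lemma bfZr n (M : 'M[R]_n) a x y : bf M x (a *: y) = a * bf M x y.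
Proof. by rewrite /bf -!scalemxAr mxE. Qed.

Lemma bf_delta n (M : 'M[R]_n) i j : bf M (delta_mx i 0) (delta_mx j 0) = M i j.
Proof. by rewrite /bf trmx_delta -rowE -colE !mxE. Qed.

Lemma bfC n (M : 'M[R]_n) x y : M^T = M -> bf M x y = bf M y x.
Proof.
move=> sM; rewrite /bf -[in LHS](trmxK (x^T *m M *m y)) mxE.
by rewrite !trmx_mul sM trmxK mulmxA.
Qed.

Lemma qf_lincomb n (M : 'M[R]_n) a b u v : M^T = M ->
  qf M (a *: u + b *: v) = a ^+ 2 * qf M u + 2 * a * b * bf M u v + b ^+ 2 * qf M v.
Proof.
move=> sM; rewrite /qf bfDl !bfDr !bfZl !bfZr (bfC v u sM); ring.
Qed.

End QuadraticForm.

Section Definiteness.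
Variable R : realType.

Lemma pdmx_psd n (M : 'M[R]_n) : pdmx M -> psdmx M.
Proof.
move=> [sM pM]; split=> // x.
by have [->|/pM/ltW//] := eqVneq x 0; rewrite mulmx0 mxE.
Qed.

Lemma pdmx_unit n (M : 'M[R]_n) : pdmx M -> M \in unitmx.
Proof.
move=> [_ pM]; rewrite unitmxE unitfE; apply/negP => /det0P [v v0 vM].
have /pM : v^T != 0 by rewrite -(inj_eq trmx_inj) trmxK trmx0.
by rewrite trmxK vM mul0mx mxE ltxx.
Qed.

Lemma pdmx_ulsub p1 p2 (M : 'M[R]_(p1 + p2)) : pdmx M -> pdmx (ulsubmx M).
Proof.
move=> [sM pM]; split=> [|y y0]; first by rewrite trmx_ulsub sM.
change (0 < qf (ulsubmx M) y).
have -> : qf (ulsubmx M) y = qf M (col_mx y 0).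
  rewrite /qf /bf -{2}[M]submxK tr_col_mx mul_row_block mul_row_col trmx0.
  by rewrite !mul0mx !mulmx0 !addr0.
by apply: pM; rewrite col_mx_eq0 negb_and y0.
Qed.

Lemma pdmx_drsub p1 p2 (M : 'M[R]_(p1 + p2)) : pdmx M -> pdmx (drsubmx M).
Proof.
move=> [sM pM]; split=> [|y y0]; first by rewrite trmx_drsub sM.
change (0 < qf (drsubmx M) y).
have -> : qf (drsubmx M) y = qf M (col_mx 0 y).
  rewrite /qf /bf -{2}[M]submxK tr_col_mx mul_row_block mul_row_col trmx0.
  by rewrite !mul0mx !mulmx0 !add0r.
by apply: pM; rewrite col_mx_eq0 negb_and y0 orbT.
Qed.

Lemma pdmx_congr_add n m (X : 'M[R]_n) (C : 'M[R]_(m, n)) (Rc : 'M[R]_m) :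
  psdmx X -> pdmx Rc -> pdmx (C *m X *m C^T + Rc).
Proof.
move=> [sX pX] [sR pR]; split=> [|y y0].
  by rewrite linearD /= !trmx_mul trmxK sX sR mulmxA.
change (0 < qf (C *m X *m C^T + Rc) y).
by rewrite qfD qf_conj; apply: ltr_wpDl; [exact: pX | exact: pR].
Qed.

Lemma psdmx_entry n (M : 'M[R]_n) i j : psdmx M -> `|M i j| <= (M i i + M j j) / 2.
Proof.
move=> [sM pM].
have : 0 <= qf M (1 *: delta_mx i 0 + 1 *: delta_mx j 0) := pM _.
have : 0 <= qf M (1 *: delta_mx i 0 + (-1) *: delta_mx j 0) := pM _.
rewrite !qf_lincomb // /qf !bf_delta => hm hp.
rewrite ler_norml; apply/andP; split; lra.
Qed.

Lemma psdmx_diag_le_trace n (M : 'M[R]_n) i : psdmx M -> M i i <= \tr M.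
Proof.
move=> [_ pM]; have diag_ge0 k : 0 <= M k k by rewrite -bf_delta; apply: pM.
by rewrite /mxtrace (bigD1 i) //= lerDl sumr_ge0.
Qed.

Lemma cauchy_schwarz n (M : 'M[R]_n) u v : psdmx M -> 0 < qf M u ->
  bf M u v ^+ 2 <= qf M u * qf M v.
Proof.
move=> [sM pM] u_gt0.
have : 0 <= qf M (qf M u *: v + (- bf M u v) *: u) := pM _.
rewrite qf_lincomb // (bfC v u sM) => h.
by rewrite -subr_ge0 -(pmulr_rge0 _ u_gt0); nra.
Qed.

End Definiteness.

Section Domination.
Variable R : realType.

Lemma qf_le_sum_sqr n (M : 'M[R]_n) x :
  qf M x <= (\sum_j \sum_i `|M i j|) * \sum_k x k 0 ^+ 2.
Proof.
have sqr_le_sum i : x i 0 ^+ 2 <= \sum_k x k 0 ^+ 2.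
  by rewrite (bigD1 i) //= lerDl sumr_ge0 // => k _; apply: sqr_ge0.
rewrite /qf /bf mxE big_distrl; apply: ler_sum => j _.
rewrite mxE !big_distrl; apply: ler_sum => i _ /=; rewrite mxE.
have := sqr_le_sum i; have := sqr_le_sum j.
set S := \sum_k _ => hj hi.
have xx_le : `|x i 0 * x j 0| <= S by rewrite ler_norml; apply/andP; split; nra.
by rewrite mulrAC mulrC (le_trans (ler_norm _)) // normrM; apply: ler_wpM2l.
Qed.

Lemma sum_sqr_le_qf n (P : 'M[R]_n) : pdmx P ->
  exists2 c : R, 0 <= c & forall x : 'cV_n, \sum_k x k 0 ^+ 2 <= c * qf P x.
Proof.
move=> pdP; have [sP pP] := pdP.
(* x i 0 is the P-inner product of u i = P^-1 e_i with x, so Cauchy-Schwarz applies. *)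
pose u i := invmx P *m delta_mx i (0 : 'I_1).
have Pu i : P *m u i = delta_mx i 0 by rewrite mulKVmx // pdmx_unit.
have bf_u i x : bf P (u i) x = x i 0.
  by rewrite /bf -[X in _ *m X *m _]sP -trmx_mul Pu trmx_delta -rowE mxE.
have u_gt0 i : 0 < qf P (u i).
  apply: pP; apply/eqP => u0; have /matrixP/(_ i 0) := Pu i.
  by rewrite u0 mulmx0 !mxE !eqxx => /esym/eqP; rewrite oner_eq0.
exists (\sum_i qf P (u i)) => [|x]; first by rewrite sumr_ge0 // => i _; apply: ltW.
rewrite big_distrl; apply: ler_sum => i _ /=; rewrite -bf_u.
exact: cauchy_schwarz (pdmx_psd pdP) (u_gt0 i).
Qed.

Lemma pdmx_dominates n (M P : 'M[R]_n) : pdmx P ->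
  exists2 al, 1 <= al & loewner_le M (al *: P).
Proof.
move=> pdP; have [c c_ge0 hc] := sum_sqr_le_qf pdP; have [_ pP] := pdmx_psd pdP.
set s := \sum_j \sum_i `|M i j|.
have s_ge0 : 0 <= s by rewrite sumr_ge0 // => j _; rewrite sumr_ge0.
exists (1 + s * c) => [|x]; first by rewrite lerDl mulr_ge0.
rewrite qfZ (le_trans (qf_le_sum_sqr M x)) // mulrDl mul1r.
by rewrite (le_trans (ler_wpM2l s_ge0 (hc x))) // mulrA lerDr pP.
Qed.

Lemma psdmx_entry_le_trace n (M P : 'M[R]_n) al i j :
  psdmx M -> psdmx P -> 0 <= al -> loewner_le M (al *: P) -> `|M i j| <= al * \tr P.
Proof.
move=> psdM psdP al_ge0 leMP.
have diag_le k : M k k <= al * \tr P.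
  have := leMP (delta_mx k 0); rewrite qfZ /qf !bf_delta => /le_trans; apply.
  by rewrite ler_wpM2l // psdmx_diag_le_trace.
have := psdmx_entry i j psdM; have := diag_le i; have := diag_le j; lra.
Qed.

End Domination.

Section Riccati.
Variables (R : realType) (n m : nat).
Implicit Types (A X : 'M[R]_n) (C : 'M[R]_(m, n)) (Rc : 'M[R]_m) (K : 'M[R]_(n, m)).

Definition kalman_gain A X C Rc : 'M[R]_(n, m) :=
  A *m X *m C^T *m invmx (C *m X *m C^T + Rc).

Definition kalman_corr A X C Rc : 'M[R]_n := kalman_gain A X C Rc *m C *m X *m A^T.

Definition closed_loop A X C Rc K : 'M[R]_n :=
  (A + K *m C) *m X *m (A + K *m C)^T + K *m Rc *m K^T.

Variables (A X : 'M[R]_n) (C : 'M[R]_(m, n)) (Rc : 'M[R]_m).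
Hypotheses (psdX : psdmx X) (pdRc : pdmx Rc).

Lemma kalman_corr_sym : (kalman_corr A X C Rc)^T = kalman_corr A X C Rc.
Proof.
have [[sX _] [sS _]] := (psdX, pdmx_congr_add C psdX pdRc).
by rewrite /kalman_corr /kalman_gain !trmx_mul !trmxK trmx_inv sS sX !mulmxA.
Qed.

Lemma closed_loop_square K :
  closed_loop A X C Rc K = A *m X *m A^T - kalman_corr A X C Rc
    + (K + kalman_gain A X C Rc) *m (C *m X *m C^T + Rc) *m (K + kalman_gain A X C Rc)^T.
Proof.
have [[sX _] pdS] := (psdX, pdmx_congr_add C psdX pdRc).
have uS := pdmx_unit pdS; have [sS _] := pdS.
rewrite /kalman_corr /kalman_gain.
move: uS sS; set S := C *m X *m C^T + Rc => uS sS.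
have defS : S = C *m X *m C^T + Rc by [].
set G := A *m X *m C^T *m invmx S.
have GS : G *m S = A *m X *m C^T by rewrite /G (mulmxKV uS).
have SGt : S *m G^T = C *m X *m A^T.
  by rewrite /G !trmx_mul trmx_inv sS !trmxK sX !mulmxA (mulmxV uS) mul1mx.
clearbody G S.
rewrite [(K + G)^T]linearD /= !mulmxDr !mulmxDl -(mulmxA K S G^T) -(mulmxA G S G^T).
rewrite SGt GS defS /closed_loop linearD /= trmx_mul !mulmxDr !mulmxDl !mulmxA.
set b := K *m C *m X *m A^T; set c := A *m X *m C^T *m K^T; set g := G *m C *m X *m A^T.
by rewrite [RHS]addrAC [_ + (b + g)]addrA !addrA addrK !(addrAC _ c) !(addrAC _ b).
Qed.

Lemma qf_closed_loop K x :
  qf (closed_loop A X C Rc K) x = qf X ((A + K *m C)^T *m x) + qf Rc (K^T *m x).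
Proof. by rewrite qfD !qf_conj. Qed.

Lemma closed_loop_qf_ge0 K x : 0 <= qf (closed_loop A X C Rc K) x.
Proof.
have [[_ pX] [_ pR]] := (psdX, pdmx_psd pdRc).
by rewrite qf_closed_loop addr_ge0 //; [apply: pX | apply: pR].
Qed.

Lemma riccati_le_closed_loop K :
  loewner_le (A *m X *m A^T - kalman_corr A X C Rc) (closed_loop A X C Rc K).
Proof.
have [_ pS] := pdmx_psd (pdmx_congr_add C psdX pdRc).
by move=> x; rewrite closed_loop_square [in X in _ <= X]qfD qf_conj lerDl; apply: pS.
Qed.

Lemma riccati_psd : psdmx (A *m X *m A^T - kalman_corr A X C Rc).
Proof.
have [sX _] := psdX; split=> [|x].
  by rewrite linearB /= kalman_corr_sym !trmx_mul trmxK sX mulmxA.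
have := closed_loop_qf_ge0 (- kalman_gain A X C Rc) x.
by rewrite closed_loop_square addNr mul0mx mul0mx addr0.
Qed.

End Riccati.

Lemma loewner_gtW (R : realType) n (M N : 'M[R]_n) : loewner_gt M N -> loewner_le N M.
Proof. by move=> /pdmx_psd [_ pMN] x; rewrite -subr_ge0 -(qfB M N); apply: pMN. Qed.

Lemma affine_le_scale (R : realType) (a b c al : R) :
  1 <= al -> 0 <= c -> a <= al * b -> a + c <= al * (b + c).
Proof. by move=> *; nra. Qed.

Section EKF.
Variables (R : realType) (n p1 p2 : nat) (A : nat -> 'M[R]_n).
Variables (C1 : 'M[R]_(p1, n)) (C2 : 'M[R]_(p2, n)) (Q : 'M[R]_n) (Rm : 'M[R]_(p1 + p2)).
Variables (l1 l2 : R).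

Notation g := (gEKF A C1 C2 Q Rm l1 l2).
Notation phi := (phiEKF A C1 C2 Q Rm l1 l2).

Lemma qf_gEKF k X x :
  qf (g k X) x =
    (1 - l1) * (1 - l2) * (qf (A k *m X *m (A k)^T) x + qf Q x)
  + l1 * l2 * (qf (A k *m X *m (A k)^T - kalman_corr (A k) X (col_mx C1 C2) Rm) x + qf Q x)
  + l1 * (1 - l2) * (qf (A k *m X *m (A k)^T - kalman_corr (A k) X C1 (ulsubmx Rm)) x
                     + qf Q x)
  + (1 - l1) * l2 * (qf (A k *m X *m (A k)^T - kalman_corr (A k) X C2 (drsubmx Rm)) x
                     + qf Q x).
Proof. by rewrite /gEKF /kalman_corr /kalman_gain !(qfB, qfD, qfZ); ring. Qed.

Lemma qf_phiEKF k K K1 K2 X x :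
  qf (phi k K K1 K2 X) x =
    (1 - l1) * (1 - l2) * (qf (A k *m X *m (A k)^T) x + qf Q x)
  + l1 * l2 * (qf (closed_loop (A k) X (col_mx C1 C2) Rm K) x + qf Q x)
  + l1 * (1 - l2) * (qf (closed_loop (A k) X C1 (ulsubmx Rm) K1) x + qf Q x)
  + (1 - l1) * l2 * (qf (closed_loop (A k) X C2 (drsubmx Rm) K2) x + qf Q x).
Proof. by rewrite /phiEKF /closed_loop !(qfD, qfZ); ring. Qed.

Hypotheses (pdQ : pdmx Q) (pdR : pdmx Rm) (hl1 : 0 <= l1 <= 1) (hl2 : 0 <= l2 <= 1).

Let weights_ge0 :
  [/\ 0 <= (1 - l1) * (1 - l2), 0 <= l1 * l2, 0 <= l1 * (1 - l2) & 0 <= (1 - l1) * l2].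
Proof.
by case/andP: hl1 => ? ?; case/andP: hl2 => ? ?; split; apply: mulr_ge0; rewrite ?subr_ge0.
Qed.

Lemma gEKF_psd k X : psdmx X -> psdmx (g k X).
Proof.
move=> psdX; have [sX pX] := psdX; have [sQ pQ] := pdmx_psd pdQ.
have [w00 w11 w10 w01] := weights_ge0.
have [_ pC1] := riccati_psd (A k) C1 psdX (pdmx_ulsub pdR).
have [_ pC2] := riccati_psd (A k) C2 psdX (pdmx_drsub pdR).
have [_ pC] := riccati_psd (A k) (col_mx C1 C2) psdX pdR.
split=> [|x].
  have s0 := kalman_corr_sym (A k) (col_mx C1 C2) psdX pdR.
  have s1 := kalman_corr_sym (A k) C1 psdX (pdmx_ulsub pdR).
  have s2 := kalman_corr_sym (A k) C2 psdX (pdmx_drsub pdR).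
  rewrite /kalman_corr /kalman_gain in s0 s1 s2.
  by rewrite /gEKF !linearB !linearZ /= linearD /= s0 s1 s2 sQ !trmx_mul trmxK sX mulmxA.
have pAXA : 0 <= qf (A k *m X *m (A k)^T) x by rewrite qf_conj; apply: pX.
move: (pQ x) (pC x) (pC1 x) (pC2 x) => *.
change (0 <= qf (g k X) x).
by rewrite qf_gEKF !addr_ge0 // mulr_ge0 // addr_ge0.
Qed.

Lemma gEKF_le_phiEKF k K K1 K2 X : psdmx X -> loewner_le (g k X) (phi k K K1 K2 X).
Proof.
move=> psdX x; have [w00 w11 w10 w01] := weights_ge0.
rewrite qf_gEKF qf_phiEKF; apply: lerD; first apply: lerD; first apply: lerD => //.
- by apply: ler_wpM2l; rewrite // lerD2r; apply: riccati_le_closed_loop.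
- by apply: ler_wpM2l; rewrite // lerD2r; apply: riccati_le_closed_loop (pdmx_ulsub pdR) _ _.
- by apply: ler_wpM2l; rewrite // lerD2r; apply: riccati_le_closed_loop (pdmx_drsub pdR) _ _.
Qed.

Lemma phiEKF_le_scale k K K1 K2 X Y al : 1 <= al ->
  loewner_le X (al *: Y) -> loewner_le (phi k K K1 K2 X) (al *: phi k K K1 K2 Y).
Proof.
move=> al_ge1 leXY x; have [w00 w11 w10 w01] := weights_ge0.
have [[_ pQ] [_ pR]] := (pdmx_psd pdQ, pdmx_psd pdR).
have [[_ pR1] [_ pR2]] := (pdmx_psd (pdmx_ulsub pdR), pdmx_psd (pdmx_drsub pdR)).
have leXY' v : qf X v <= al * qf Y v by rewrite -qfZ.
rewrite qfZ !qf_phiEKF !(mulrDr al) !(mulrCA al) !qf_closed_loop !qf_conj -!addrA.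
apply: lerD; last apply: lerD; last apply: lerD.
all: apply: ler_wpM2l => //; apply: affine_le_scale => //.
all: rewrite ?addr_ge0 //; solve [apply: pQ | apply: pR | apply: pR1 | apply: pR2].
Qed.

Lemma gEKF_dominated k K K1 K2 X Y al : 1 <= al -> psdmx X ->
  loewner_le X (al *: Y) -> loewner_le (phi k K K1 K2 Y) Y -> loewner_le (g k X) (al *: Y).
Proof.
move=> al_ge1 psdX leXY lePhi x.
apply: le_trans (gEKF_le_phiEKF k K K1 K2 psdX x) _.
apply: le_trans (phiEKF_le_scale k K K1 K2 al_ge1 leXY x) _.
by rewrite !qfZ ler_wpM2l // (le_trans ler01).
Qed.

End EKF.

Theorem lemma2 (R : realType) (n p1 p2 : nat)
  (hn : (0 < n)%N) (hp1 : (0 < p1)%N) (hp2 : (0 < p2)%N)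
  (A : nat -> 'M[R]_n) (C1 : 'M[R]_(p1, n)) (C2 : 'M[R]_(p2, n))
  (Q : 'M[R]_n) (Rm : 'M[R]_(p1 + p2))
  (hQ : pdmx Q) (hR : pdmx Rm)
  (l1 l2 : R) (hl1 : 0 <= l1 <= 1) (hl2 : 0 <= l2 <= 1)
  (Kg : nat -> 'M[R]_(n, p1 + p2)) (Kg1 : nat -> 'M[R]_(n, p1))
  (Kg2 : nat -> 'M[R]_(n, p2)) (Pbar : 'M[R]_n)
  (hPbar : pdmx Pbar)
  (hphi : forall k : nat,
      loewner_gt Pbar (phiEKF A C1 C2 Q Rm l1 l2 k (Kg k) (Kg1 k) (Kg2 k) Pbar))
  (P : nat -> 'M[R]_n)
  (hP0 : psdmx (P 0%N))
  (hrec : forall k : nat, P k.+1 = gEKF A C1 C2 Q Rm l1 l2 k (P k)) :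
  exists c : R, forall (k : nat) (i j : 'I_n), `|P k i j| <= c.
Proof.
have [al al_ge1 leP0] := pdmx_dominates (P 0%N) hPbar.
have dominated k : psdmx (P k) /\ loewner_le (P k) (al *: Pbar).
  elim: k => [//|k [psdPk lePk]]; rewrite hrec; split; first exact: gEKF_psd.
  exact: gEKF_dominated al_ge1 psdPk lePk (loewner_gtW (hphi k)).
exists (al * \tr Pbar) => k i j; have [psdPk lePk] := dominated k.
exact: psdmx_entry_le_trace psdPk (pdmx_psd hPbar) (le_trans ler01 al_ge1) lePk.
Qed.
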